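(* Fix a subject entity $s$ and a finite set $E$ of candidate events for $s$, and define for $T\subseteq E$ $$\mathrm{Rel}(s,T)=\lambda\,\mathrm{ERel}(s,T)+(1-\lambda)\,\mathrm{DRel}(s,T),$$ where $$\mathrm{ERel}(s,T)=w^e_1\,\mathrm{E2E}(s,T)+w^e_2\,\mathrm{E2EPath}(T)+w^e_3\,\mathrm{G2E}(T),\qquad \mathrm{DRel}(s,T)=w^d_1\,\mathrm{E2D}(s,T)+w^d_2\,\mathrm{E2DPath}(T),$$ with $$\mathrm{E2E}(s,T)=\sum_{re\in\{\mathrm{RE}(e)\,:\,e\in T\}}\mathrm{E2ECooc}(s,re),\qquad \mathrm{G2E}(T)=\sum_{re\in\{\mathrm{RE}(e)\,:\,e\in T\}}\mathrm{GlobalImportance}(re),$$ $$\mathrm{E2EPath}(T)=\sum_{p\in\{\pi_{RE}(e)\,:\,e\in T\}}\ \operatorname*{average}_{e\in\mathcal{E},\ \pi_{RE}(e)=p}\mathrm{E2ECooc}(\mathrm{Sub}(e),\mathrm{RE}(e)),$$ $$\mathrm{E2D}(s,T)=\sum_{t\in\{\tau(e)\,:\,e\in T\}}\mathrm{E2DCooc}(s,t),\qquad \mathrm{E2DPath}(T)=\sum_{p\in\{\pi_{\tau}(e)\,:\,e\in T\}}\ \operatorname*{average}_{e\in\mathcal{E},\ \pi_{\tau}(e)=p}\mathrm{E2DCooc}(\mathrm{Sub}(e),\tau(e)),$$ where $0\le\lambda\le 1$ and $w^e_1,w^e_2,w^e_3,w^d_1,w^d_2\ge 0$. Then $f(T)=\mathrm{Rel}(s,T)$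 is a monotone submodular set function $f:2^E\to\mathbb{R}_{\ge 0}$.
   Context: Events: $\mathcal{E}$ is the (finite) set of all events over all subjects in a knowledge base, and $E\subseteq\mathcal{E}$ is the set of candidate events of the subject $s$. Each event $e$ has a subject $\mathrm{Sub}(e)$ (with $\mathrm{Sub}(e)=s$ for $e\in E$), a related entity $\mathrm{RE}(e)$, a timestamp $\tau(e)\in\mathbb{R}$, an entity path $\pi_{RE}(e)$ and a time path $\pi_\tau(e)$ (labels drawn from some set of path types). The sums range over sets (not multisets), so each distinct related entity, timestamp, or path is counted once. $\mathrm{E2ECooc}(x,y)$ and $\mathrm{E2DCooc}(x,t)$ are nonnegative real-valued co-occurrence scores between entities (resp. an entity and a date) — in the paper, normalized pointwise mutual information computed from web co-occurrence, with only positive values retained — and $\mathrm{GlobalImportance}(re)\ge 0$ is a nonnegative score of an entity (the fraction of search queries mentioning it). A set function $f$ on $2^E$ is submodular if $f(A\cup\{e\})-f(A)\ge f(B\cup\{e\})-f(B)$ for all $A\subseteq B\subseteq E$ and $e\in E\setminus B$, and monotone if $f(A)\le f(B)$ whenever $A\subseteq B$. *)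

From HB Require Import structures.
From mathcomp Require Import all_boot all_order all_algebra.
Set Implicit Arguments. Unset Strict Implicit. Unset Printing Implicit Defensive.
Import Order.TTheory GRing.Theory Num.Theory.
Local Open Scope ring_scope.

Section Rel.
Variables (R : realFieldType) (Ev : finType) (Ent P : eqType).

Definition img (A : eqType) (g : Ev -> A) (T : {set Ev}) : seq A :=
  undup [seq g e | e <- enum T].

Definition path_avg (pi : Ev -> P) (c : Ev -> R) (p : P) : R :=
  (\sum_(e | pi e == p) c e) / #|[set e | pi e == p]|%:R.

Variables (Sub RE : Ev -> Ent) (tau : Ev -> R) (piRE pitau : Ev -> P)
  (E2ECooc : Ent -> Ent -> R) (E2DCooc : Ent -> R -> R) (GI : Ent -> R).

Definition E2E (s : Ent) (T : {set Ev}) : R :=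
  \sum_(re <- img RE T) E2ECooc s re.
Definition G2E (T : {set Ev}) : R := \sum_(re <- img RE T) GI re.
Definition E2EPath (T : {set Ev}) : R :=
  \sum_(p <- img piRE T) path_avg piRE (fun e => E2ECooc (Sub e) (RE e)) p.
Definition E2D (s : Ent) (T : {set Ev}) : R :=
  \sum_(t <- img tau T) E2DCooc s t.
Definition E2DPath (T : {set Ev}) : R :=
  \sum_(p <- img pitau T) path_avg pitau (fun e => E2DCooc (Sub e) (tau e)) p.

Definition ERel (we1 we2 we3 : R) (s : Ent) (T : {set Ev}) : R :=
  we1 * E2E s T + we2 * E2EPath T + we3 * G2E T.
Definition DRel (wd1 wd2 : R) (s : Ent) (T : {set Ev}) : R :=
  wd1 * E2D s T + wd2 * E2DPath T.
Definition Rel (lam we1 we2 we3 wd1 wd2 : R) (s : Ent) (T : {set Ev}) : R :=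
  lam * ERel we1 we2 we3 s T + (1 - lam) * DRel wd1 wd2 s T.
End Rel.

Definition monotone_on (R : realFieldType) (Ev : finType) (E : {set Ev})
  (f : {set Ev} -> R) : Prop :=
  forall A B : {set Ev}, A \subset B -> B \subset E -> f A <= f B.

Definition submodular_on (R : realFieldType) (Ev : finType) (E : {set Ev})
  (f : {set Ev} -> R) : Prop :=
  forall (A B : {set Ev}) (e : Ev), A \subset B -> B \subset E ->
    e \in E -> e \notin B ->
    f (e |: B) - f B <= f (e |: A) - f A.

(** Rel is a nonnegative combination of coverage functions
    [T |-> sum of w a over the distinct values a = g e, e in T] with [w >= 0]:
    [E2E] and [G2E] cover related entities, [E2D] covers timestamps and the
    path terms cover path labels (each path average being a nonnegative
    constant attached to its label). A coverage function is nonnegative and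
    monotone, and adding [e] to [T] gains [w (g e)] exactly when [g e] is not
    yet covered by [T], a condition that only becomes harder to meet as [T]
    grows; this is submodularity. All three properties are preserved by sums
    and by nonnegative scalings. *)
From mathcomp Require Import all_boot all_order all_algebra.
Import Order.TTheory GRing.Theory Num.Theory.
Local Open Scope ring_scope.
Set Implicit Arguments. Unset Strict Implicit.

Section SetFunctions.
Variables (R : realFieldType) (Ev : finType).

Definition nonneg_monotone_submodular (F : {set Ev} -> R) : Prop :=
  [/\ forall T, 0 <= F T,
      forall A B : {set Ev}, A \subset B -> F A <= F B
    & forall (A B : {set Ev}) e, A \subset B -> e \notin B ->
        F (e |: B) - F B <= F (e |: A) - F A].

Lemma nms_add F G :
  nonneg_monotone_submodular F -> nonneg_monotone_submodular G ->
  nonneg_monotone_submodular (fun T => F T + G T).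
Proof.
move=> [F0 F1 F2] [G0 G1 G2]; split=> [T|A B AB|A B e AB eB].
- by rewrite addr_ge0.
- by rewrite lerD ?F1 ?G1.
have addBB (a b c d : R) : a + b - (c + d) = (a - c) + (b - d).
  by rewrite opprD addrACA.
by rewrite !addBB lerD ?F2 ?G2.
Qed.

Lemma nms_scale c F : 0 <= c ->
  nonneg_monotone_submodular F -> nonneg_monotone_submodular (fun T => c * F T).
Proof.
move=> c0 [F0 F1 F2]; split=> [T|A B AB|A B e AB eB].
- by rewrite mulr_ge0.
- by rewrite ler_wpM2l ?F1.
by rewrite -!mulrBr ler_wpM2l ?F2.
Qed.

Section Coverage.
Variables (A : eqType) (g : Ev -> A) (w : A -> R).

Definition coverage (T : {set Ev}) : R := \sum_(a <- img g T) w a.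

Lemma mem_img (a : A) (T : {set Ev}) : (a \in img g T) = [exists x in T, g x == a].
Proof.
rewrite mem_undup; apply/mapP/existsP => [[x]|[x /andP[xT /eqP <-]]].
  by rewrite mem_enum => xT ->; exists x; rewrite xT eqxx.
by exists x; rewrite ?mem_enum.
Qed.

Lemma img_subset (S T : {set Ev}) : S \subset T -> {subset img g S <= img g T}.
Proof.
move=> /subsetP ST a; rewrite !mem_img => /existsP[x /andP[xS xa]].
by apply/existsP; exists x; rewrite ST.
Qed.

Lemma mem_img_setU1 (a : A) (e : Ev) (T : {set Ev}) :
  (a \in img g (e |: T)) = (a == g e) || (a \in img g T).
Proof.
rewrite !mem_img; apply/existsP/orP => [[x /andP[]]|].
  rewrite in_setU1 => /orP[/eqP -> /eqP ->|xT xa]; first by left.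
  by right; apply/existsP; exists x; rewrite xT.
case=> [/eqP ->|/existsP[x /andP[xT xa]]].
  by exists e; rewrite setU11 eqxx.
by exists x; rewrite in_setU1 xT orbT.
Qed.

Lemma perm_img_setU1 (e : Ev) (T : {set Ev}) :
  perm_eq (img g (e |: T))
    (if g e \in img g T then img g T else g e :: img g T).
Proof.
apply: uniq_perm; first exact: undup_uniq.
  by case: ifPn => [_|/= ->]; rewrite undup_uniq.
move=> a; rewrite mem_img_setU1.
case: ifPn => [geT|_]; last by rewrite inE.
by apply/orP/idP => [[/eqP ->|]|->] //; right.
Qed.

Lemma coverage_gain (e : Ev) (T : {set Ev}) :
  coverage (e |: T) - coverage T = if g e \in img g T then 0 else w (g e).
Proof.
rewrite /coverage (perm_big _ (perm_img_setU1 e T)).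
by case: ifP => _; rewrite ?subrr // big_cons addrK.
Qed.

Hypothesis w_ge0 : forall a, 0 <= w a.

Lemma coverage_ge0 (T : {set Ev}) : 0 <= coverage T.
Proof. by rewrite /coverage big_seq_cond sumr_ge0. Qed.

Lemma coverage_monotone (S T : {set Ev}) : S \subset T -> coverage S <= coverage T.
Proof.
move=> ST; rewrite /coverage [leRHS](bigID (mem (img g S))) /=.
rewrite -[leLHS]addr0 lerD ?sumr_ge0 // -[leRHS]big_filter.
rewrite [leRHS](perm_big (img g S)) //.
apply: uniq_perm; rewrite ?filter_uniq ?undup_uniq // => a.
by rewrite mem_filter andb_idr // => /(img_subset ST).
Qed.

Lemma nms_coverage : nonneg_monotone_submodular coverage.
Proof.
split; [exact: coverage_ge0 | exact: coverage_monotone |].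
move=> S T e ST _; rewrite !coverage_gain.
case: ifPn => [_|geT]; first by case: ifP.
by case: ifPn => // /(img_subset ST); rewrite (negbTE geT).
Qed.

End Coverage.

Lemma path_avg_ge0 (P : eqType) (pi : Ev -> P) (c : Ev -> R) p :
  (forall e, 0 <= c e) -> 0 <= path_avg pi c p.
Proof. by move=> c0; rewrite /path_avg divr_ge0 // sumr_ge0. Qed.

End SetFunctions.

Theorem theorem1 (R : realFieldType) (Ev : finType) (Ent P : eqType)
  (Sub RE : Ev -> Ent) (tau : Ev -> R) (piRE pitau : Ev -> P)
  (E2ECooc : Ent -> Ent -> R) (E2DCooc : Ent -> R -> R) (GI : Ent -> R)
  (s : Ent) (E : {set Ev})
  (lam we1 we2 we3 wd1 wd2 : R) :
  (forall e, e \in E -> Sub e = s) ->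
  (forall x y, 0 <= E2ECooc x y) ->
  (forall x t, 0 <= E2DCooc x t) ->
  (forall x, 0 <= GI x) ->
  0 <= lam -> lam <= 1 ->
  0 <= we1 -> 0 <= we2 -> 0 <= we3 -> 0 <= wd1 -> 0 <= wd2 ->
  let f := Rel Sub RE tau piRE pitau E2ECooc E2DCooc GI
             lam we1 we2 we3 wd1 wd2 s in
  (forall T : {set Ev}, T \subset E -> 0 <= f T) /\
  monotone_on E f /\ submodular_on E f.
Proof.
(* The properties hold on all of 2^Ev. *)
move=> _ E2E_ge0 E2D_ge0 GI_ge0 lam_ge0 lam_le1 we1_ge0 we2_ge0 we3_ge0
  wd1_ge0 wd2_ge0 f.
have lamC_ge0 : 0 <= 1 - lam by rewrite subr_ge0.
have [f_ge0 f_mono f_sub] : nonneg_monotone_submodular f.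
  apply: nms_add; apply: nms_scale => //; repeat apply: nms_add;
    apply: nms_scale => //; apply: nms_coverage => // a;
    exact: path_avg_ge0.
split=> [T _|]; first exact: f_ge0.
by split=> [A B AB _|A B e AB _ _ eB]; [exact: f_mono | exact: f_sub].
Qed.
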